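(* Let $b\ge2$, $d\ge1$ be integers, $\ell\in\mathbb{N}_0$ and $0<\epsilon<b^{-\ell}$. For every $L\in\mathbb{N}$ there exists $q_d\in\mathcal{NN}_{d,1}(2d\,b^{\lceil\ell/L\rceil},L)$ such that for every ${\bf i}\in I_\ell$, \[ q_d(x)=\mathrm{ind}({\bf i}):=\sum_{j=1}^d b^{\ell(j-1)}{\bf i}_j\qquad\text{for all } x\in\Omega^\ell_{{\bf i},\epsilon}. \]
   Context: $\mathcal{NN}_{d,k}(W,L)$: set of maps $g:\mathbb{R}^d\to\mathbb{R}^k$ given by $g_0(x)=x$, $g_{\ell+1}(x)=\sigma(A_\ell g_\ell(x)+b_\ell)$ ($\ell=0,\dots,L-1$), $g(x)=A_Lg_L(x)+b_L$, with $A_\ell\in\mathbb{R}^{N_{\ell+1}\times N_\ell}$, $b_\ell\in\mathbb{R}^{N_{\ell+1}}$, $N_0=d$, $N_{L+1}=k$, $\max\{N_1,\dots,N_L\}\le W$, $\sigma(t)=\max\{t,0\}$ componentwise. Partition with base $b$: for $\ell\in\mathbb{N}_0$, $I_\ell=\{0,\dots,b^\ell-1\}^d$. For ${\bf i}\in I_\ell$ and $\epsilon>0$, $\Omega^\ell_{{\bf i},\epsilon}=\prod_{j=1}^dJ_j$ where $J_j=[b^{-\ell}{\bf i}_j,\,b^{-\ell}({\bf i}_j+1)-\epsilon)$ if ${\bf i}_j<b^\ell-1$ and $J_j=[1-b^{-\ell},1)$ if ${\bf i}_j=b^\ell-1$. *)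

From HB Require Import structures.
From mathcomp Require Import all_boot all_order all_algebra.
From mathcomp Require Import reals.
Set Implicit Arguments. Unset Strict Implicit. Unset Printing Implicit Defensive.
Import Order.TTheory GRing.Theory Num.Theory.
Local Open Scope ring_scope.

Definition relu {R : realType} (t : R) : R := Num.max t 0.

(* A ReLU network with output dimension k, input dimension n and L hidden layers. *)
Inductive relu_net (R : realType) (k : nat) : nat -> nat -> Type :=
| NOut (n : nat) (A : 'M[R]_(k, n)) (b : 'cV[R]_k) : relu_net R k n 0
| NLayer (n m L : nat) (A : 'M[R]_(m, n)) (b : 'cV[R]_m) (N : relu_net R k m L)
    : relu_net R k n L.+1.

Fixpoint net_width (R : realType) (k n L : nat) (N : relu_net R k n L) : nat :=
  match N with
  | NOut _ _ _ => 0%N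
  | @NLayer _ _ _ m _ _ _ N' => maxn m (net_width N')
  end.

Fixpoint net_eval (R : realType) (k n L : nat) (N : relu_net R k n L)
  : 'cV[R]_n -> 'cV[R]_k :=
  match N with
  | NOut _ A b => fun x => A *m x + b
  | NLayer _ _ _ A b N' => fun x => net_eval N' (map_mx relu (A *m x + b))
  end.

Definition NN (R : realType) (d k W L : nat) : ('cV[R]_d -> 'cV[R]_k) -> Prop :=
  fun g => exists N : relu_net R k d L, (net_width N <= W)%N /\ net_eval N = g.

Definition bpow_inv (R : realType) (b l : nat) : R := ((b ^ l)%N%:R)^-1.

Definition in_Omega (R : realType) (b d l : nat) (i : 'I_d -> nat) (eps : R)
    (x : 'cV[R]_d) : Prop :=
  forall j : 'I_d,
    if (i j < (b ^ l).-1)%N then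
      bpow_inv R b l * (i j)%:R <= x j ord0 /\
      x j ord0 < bpow_inv R b l * (i j).+1%:R - eps
    else 1 - bpow_inv R b l <= x j ord0 /\ x j ord0 < 1.

(* ind(i) = sum_{j=1}^d b^{l(j-1)} i_j  (0-based j here) *)
Definition ind (R : realType) (b d l : nat) (i : 'I_d -> nat) : R :=
  \sum_(j < d) ((b ^ (l * j)) * i j)%N%:R.

From HB Require Import structures.
From mathcomp Require Import all_boot all_order all_algebra.
From mathcomp Require Import reals.
From mathcomp Require Import zify.
From mathcomp.algebra_tactics Require Import ring lra.
Set Implicit Arguments. Unset Strict Implicit. Unset Printing Implicit Defensive.
Import Order.TTheory GRing.Theory Num.Theory.
Local Open Scope ring_scope.

(* The first layer applies y = (1 - eps/2) b^l x + (b^l - 1) eps/2 coordinatewise; on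
   Omega^l_{i,eps} this puts y_j in [i_j, i_j + 1 - eps/2], so i_j is the integer part of
   y_j with a margin eps/2.  The remaining layers extract i_j in base B = b^m,
   m = ceil(l/L), most significant digit first: each layer carries y_j and the partial
   value s_j (i_j rounded down to a multiple of B^(k+1)) through two identity neurons,
   and adds B^k times the next digit, written as the sum over t = 1..B-1 of the steps
   [t B^k <= y_j - s_j]; each step is the difference of two ReLU ramps of slope 2/eps.
   This takes 2B neurons per coordinate, and the output layer returns
   sum_j b^(l j) i_j. *)

Lemma ge0_relu (R : realType) (t : R) : 0 <= t -> relu t = t.
Proof. by move=> t_ge0; rewrite /relu max_l. Qed.

Lemma le0_relu (R : realType) (t : R) : t <= 0 -> relu t = 0.
Proof. by move=> t_le0; rewrite /relu max_r. Qed.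

Lemma relu_ramp_diff (R : realType) (rho r : R) (i a : nat) : 0 < rho ->
  i%:R <= r <= i%:R + 1 - rho ->
  relu ((r - a%:R + rho) / rho) - relu ((r - a%:R) / rho) = (a <= i)%N%:R.
Proof.
move=> rho_gt0 /andP[ri ir]; case: leqP => [ai | ia] /=.
  have ai' : a%:R <= i%:R :> R by rewrite ler_nat.
  by rewrite !ge0_relu ?divr_ge0 //; [field; rewrite gt_eqF | lra..].
have ia' : i%:R + 1 <= a%:R :> R by rewrite natr1 ler_nat.
by rewrite !le0_relu ?subr0 // pmulr_lle0 ?invr_gt0 //; lra.
Qed.

Lemma sum_ord_pos_le (K B : nat) : (K < B)%N ->
  (\sum_(t < B) ((0 < t) && (t <= K)))%N = K.
Proof.
suff sum_min : (\sum_(t < B) ((0 < t) && (t <= K)))%N = minn K B.-1 by lia.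
elim: B => [|B IH]; first by rewrite big_ord0; lia.
rewrite big_ord_recr /= IH; case: B {IH} => [|B] /=; first lia.
case: leqP => /=; lia.
Qed.

Section DigitUnits.
Variables (R : realType) (B : nat) (rho : R).
Implicit Types (u : 'I_B * bool) (q Q Y S : R).

(* Unit (0, false) copies Y and unit (0, true) copies S; for t > 0, units (t, false) and
   (t, true) are the ramps (Y - S - t q + rho) / rho and (Y - S - t q) / rho. *)
Definition unit_wY u : R := if u.1 == 0%N :> nat then (~~ u.2)%:R else rho^-1.
Definition unit_wS u : R := if u.1 == 0%N :> nat then u.2%:R else - rho^-1.
Definition unit_bias q u : R :=
  if u.1 == 0%N :> nat then 0 else (~~ u.2)%:R - u.1%:R * q / rho.

Definition digit_unit q u Y S : R := relu (unit_wY u * Y + unit_wS u * S + unit_bias q u).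

Definition readY u : R := ((u.1 == 0%N :> nat) && ~~ u.2)%:R.
Definition readS Q u : R := if u.1 == 0%N :> nat then u.2%:R else if u.2 then - Q else Q.

Lemma readY_digit q Y S : (0 < B)%N -> 0 <= Y ->
  \sum_(t < B) \sum_(e : bool) readY (t, e) * digit_unit q (t, e) Y S = Y.
Proof.
move=> B_gt0 Y_ge0; rewrite (bigD1 (Ordinal B_gt0)) //= [X in _ + X]big1 ?addr0.
  rewrite big_bool /readY /digit_unit /unit_wY /unit_wS /unit_bias /=.
  by rewrite !mul0r !add0r !mul1r !addr0 ge0_relu.
move=> t t_neq0; have /negbTE t_neq0' : t != 0%N :> nat by [].
by rewrite big_bool /readY /= t_neq0' !mul0r addr0.
Qed.

Lemma readS_digit (q i : nat) (y : R) : 0 < rho -> (0 < q)%N -> (0 < B)%N ->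
  i%:R <= y <= i%:R + 1 - rho ->
  \sum_(t < B) \sum_(e : bool) readS q%:R (t, e) *
     digit_unit q%:R (t, e) y (i %/ (q * B) * (q * B))%N%:R = (i %/ q * q)%N%:R.
Proof.
move=> rho_gt0 q_gt0 B_gt0 /andP[iy yi].
set s := (i %/ (q * B) * (q * B))%N; set r := (i %% (q * B))%N.
have i_sr : i = (s + r)%N by rewrite /s /r -divn_eq.
have r_lt : (r < q * B)%N by rewrite ltn_pmod // muln_gt0 q_gt0.
have unit_pair (t : 'I_B) :
  \sum_(e : bool) readS q%:R (t, e) * digit_unit q%:R (t, e) y s%:R
    = if t == 0%N :> nat then s%:R else q%:R * ((0 < t) && (t * q <= r))%N%:R.
  rewrite big_bool /readS /digit_unit /unit_wY /unit_wS /unit_bias /=.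
  case: eqP => [_|t_neq0] /=.
    by rewrite !mul0r !mul1r !add0r !addr0 ge0_relu ?ler0n.
  have t_gt0 : (0 < t)%N by rewrite lt0n; apply/eqP.
  rewrite t_gt0 -(@relu_ramp_diff _ rho (y - s%:R) r (t * q)) //; last first.
    by rewrite i_sr natrD in iy yi; apply/andP; split; lra.
  rewrite mulrBr mulNr addrC; congr (_ * relu _ - _ * relu _);
    by rewrite natrM; field; rewrite gt_eqF.
rewrite (eq_bigr _ (fun t _ => unit_pair t)) (bigD1 (Ordinal B_gt0)) //=.
rewrite (eq_bigr (fun t : 'I_B => q%:R * ((0 < t) && (t <= r %/ q))%N%:R)); last first.
  by move=> t t_neq0; have /negbTE -> : t != 0%N :> nat by []; rewrite leq_divRL.
rewrite -mulr_sumr -natr_sum.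
have := @sum_ord_pos_le (r %/ q) B; rewrite (bigD1 (Ordinal B_gt0)) //= add0n => ->; last first.
  by rewrite ltn_divLR // mulnC.
have s_mul : s = (i %/ (q * B) * B * q)%N by rewrite /s -mulnA (mulnC B).
by rewrite -natrM -natrD i_sr s_mul divnMDl // mulnDl (mulnC q (r %/ q)%N).
Qed.
End DigitUnits.
Arguments readY {R B} u.

Section DigitNetwork.
Variables (R : realType) (b l d B : nat) (rho : R).
Local Notation node := ('I_d * ('I_B * bool))%type.
Local Notation width := #|{: node}|.

Lemma sum_nodes (F : 'I_width -> R) :
  \sum_(k < width) F k =
    \sum_(j < d) \sum_(t < B) \sum_(e : bool) F (enum_rank (j, (t, e))).
Proof.
rewrite (eq_bigr (fun k => F (enum_rank (enum_val k)))) => [|k _]; last first.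
  by rewrite enum_valK.
rewrite -(big_enum_val (fun p : node => F (enum_rank p))).
under [RHS]eq_bigr => j _ do rewrite pair_bigA.
by rewrite pair_bigA; apply: eq_big => // -[j [t e]].
Qed.

Definition input_layer (lam : R) : 'M[R]_(width, d) :=
  \matrix_(k, j) let p : node := enum_val k in if p.1 == j then unit_wY rho p.2 * lam else 0.
Definition input_bias (mu q : R) : 'cV[R]_width :=
  \col_k let p : node := enum_val k in unit_wY rho p.2 * mu + unit_bias rho q p.2.
Definition digit_layer (Q : R) : 'M[R]_(width, width) :=
  \matrix_(k, k') let p : node := enum_val k in let p' : node := enum_val k' in
    if p'.1 == p.1 then unit_wY rho p.2 * readY p'.2 + unit_wS rho p.2 * readS Q p'.2 else 0.
Definition digit_bias (q : R) : 'cV[R]_width := \col_k unit_bias rho q (enum_val k : node).2.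
Definition output_layer : 'M[R]_(1, width) :=
  \matrix_(_, k) let p : node := enum_val k in (b ^ (l * p.1))%N%:R * readS 1 p.2.

Fixpoint digit_tail (k : nat) : relu_net R 1 width k :=
  match k with
  | 0 => NOut output_layer 0
  | k.+1 => NLayer (digit_layer (B ^ k.+1)%N%:R) (digit_bias (B ^ k)%N%:R) (digit_tail k)
  end.

Definition digit_net (lam mu : R) (L : nat) : relu_net R 1 d L.+1 :=
  NLayer (input_layer lam) (input_bias mu (B ^ L)%N%:R) (digit_tail L).

Lemma digit_net_width lam mu L : (net_width (digit_net lam mu L) <= width)%N.
Proof. by rewrite /= geq_max leqnn; elim: L => //= L IH; rewrite geq_max leqnn. Qed.

Lemma input_layer_mul lam (x : 'cV[R]_d) (p : node) :
  (input_layer lam *m x) (enum_rank p) 0 = unit_wY rho p.2 * (lam * x p.1 0).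
Proof.
rewrite !mxE (bigD1 p.1) //= big1 ?addr0; first by rewrite !mxE enum_rankK /= eqxx mulrA.
by move=> j /negbTE j_neq; rewrite !mxE enum_rankK /= eq_sym j_neq mul0r.
Qed.

Lemma digit_layer_mul Q (v : 'cV[R]_width) (p : node) :
  (digit_layer Q *m v) (enum_rank p) 0 =
    unit_wY rho p.2 * \sum_(t < B) \sum_(e : bool) readY (t, e) * v (enum_rank (p.1, (t, e))) 0
  + unit_wS rho p.2 * \sum_(t < B) \sum_(e : bool) readS Q (t, e) * v (enum_rank (p.1, (t, e))) 0.
Proof.
rewrite !mxE sum_nodes (bigD1 p.1) //= [X in _ + X]big1 ?addr0; last first.
  move=> j j_neq; apply: big1 => t _; apply: big1 => e _.
  by rewrite !mxE !enum_rankK /= (negbTE j_neq) mul0r.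
rewrite !mulr_sumr -!big_split /=; apply: eq_bigr => t _.
rewrite !mulr_sumr -!big_split /=; apply: eq_bigr => e _.
by rewrite !mxE !enum_rankK /= eqxx mulrDl !mulrA.
Qed.

Lemma output_layer_mul (v : 'cV[R]_width) :
  (output_layer *m v) 0 0 = \sum_(j < d) (b ^ (l * j))%N%:R *
     \sum_(t < B) \sum_(e : bool) readS 1 (t, e) * v (enum_rank (j, (t, e))) 0.
Proof.
rewrite !mxE sum_nodes; apply: eq_bigr => j _; rewrite mulr_sumr; apply: eq_bigr => t _.
by rewrite mulr_sumr; apply: eq_bigr => e _; rewrite !mxE enum_rankK /= mulrA.
Qed.

Definition digit_state (k : nat) (i : 'I_d -> nat) (y : 'I_d -> R) (v : 'cV[R]_width) :=
  forall p : node, v (enum_rank p) 0 =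
    digit_unit rho (B ^ k)%N%:R p.2 (y p.1) (i p.1 %/ (B ^ k * B) * (B ^ k * B))%N%:R.

Hypotheses (rho_gt0 : 0 < rho) (B_gt0 : (0 < B)%N).

Lemma digit_tail_eval k i y v : (forall j, (i j)%:R <= y j <= (i j)%:R + 1 - rho) ->
  digit_state k i y v -> net_eval (digit_tail k) v 0 0 = @ind R b d l i.
Proof.
move=> y_near; elim: k v => [|k IH] v v_state /=.
  rewrite addr0 output_layer_mul /ind; apply: eq_bigr => j _.
  under eq_bigr do under eq_bigr do rewrite v_state /=.
  by rewrite (readS_digit (q := 1)) // divn1 muln1 natrM.
apply: IH => p; rewrite mxE [X in relu X]mxE digit_layer_mul mxE enum_rankK.
under eq_bigr do under eq_bigr do rewrite v_state /=.
under [X in _ + _ * X + _]eq_bigr do under eq_bigr do rewrite v_state /=.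
have /andP[iy yi] := y_near p.1.
rewrite readY_digit ?(le_trans _ iy) // readS_digit ?expn_gt0 ?B_gt0 //.
by rewrite -expnSr.
Qed.

Lemma digit_net_eval lam mu L i (x : 'cV[R]_d) : (forall j, (i j < B ^ L.+1)%N) ->
  (forall j, (i j)%:R <= lam * x j 0 + mu <= (i j)%:R + 1 - rho) ->
  net_eval (digit_net lam mu L) x 0 0 = @ind R b d l i.
Proof.
move=> i_lt x_near; apply: (digit_tail_eval x_near) => p.
rewrite mxE [X in relu X]mxE input_layer_mul mxE enum_rankK -expnSr divn_small //.
by rewrite mul0n /digit_unit; congr relu; ring.
Qed.

End DigitNetwork.

Lemma rescale_interior (R : realFieldType) (N eps i z : R) :
  0 < eps -> eps * N < 1 -> 0 <= i -> i + 2 <= N -> i <= z -> z < i + 1 - eps * N ->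
  i <= (1 - eps / 2) * z + (N - 1) * (eps / 2) <= i + 1 - eps / 2.
Proof.
move=> eps_gt0 epsN_lt1 i_ge0 iN iz zi.
have eps_lt1 : eps < 1 by nra.
have slope_ge0 : 0 <= 1 - eps / 2 by lra.
have lo : 0 <= (1 - eps / 2) * (z - i) by rewrite mulr_ge0 // subr_ge0.
have hi : 0 <= (1 - eps / 2) * (i + 1 - eps * N - z) by rewrite mulr_ge0 // subr_ge0 ltW.
apply/andP; split; nra.
Qed.

Lemma rescale_last (R : realFieldType) (N eps z : R) :
  0 < eps -> eps < 1 -> N - 1 <= z -> z < N ->
  N - 1 <= (1 - eps / 2) * z + (N - 1) * (eps / 2) <= N - eps / 2.
Proof.
move=> eps_gt0 eps_lt1 Nz zN.
have slope_ge0 : 0 <= 1 - eps / 2 by lra.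
have lo : 0 <= (1 - eps / 2) * (z - (N - 1)) by rewrite mulr_ge0 // subr_ge0.
have hi : 0 <= (1 - eps / 2) * (N - z) by rewrite mulr_ge0 // subr_ge0 ltW.
apply/andP; split; nra.
Qed.

Lemma Omega_rescale (R : realType) (b d l : nat) (i : 'I_d -> nat) (eps : R)
    (x : 'cV[R]_d) (j : 'I_d) :
  (0 < b)%N -> 0 < eps -> eps < bpow_inv R b l -> (i j < b ^ l)%N ->
  @in_Omega R b d l i eps x ->
  (i j)%:R <= (1 - eps / 2) * (b ^ l)%N%:R * x j 0 + ((b ^ l)%N%:R - 1) * (eps / 2)
           <= (i j)%:R + 1 - eps / 2.
Proof.
move=> b_gt0 eps_gt0 eps_lt ij_lt /(_ j).
set N : R := (b ^ l)%N%:R; set z := N * x j 0; rewrite -mulrA -/z.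
have N_ge1 : 1 <= N by rewrite ler1n expn_gt0 b_gt0.
have NV : N * bpow_inv R b l = 1 by rewrite mulfV // gt_eqF //; lra.
have scale_le u v : u <= v -> N * u <= N * v by apply: ler_wpM2l; lra.
have scale_lt u v : u < v -> N * u < N * v by rewrite ltr_pM2l //; lra.
have epsN_lt1 : eps * N < 1 by rewrite -NV mulrC scale_lt.
case: ifP => ij_mid [lo hi].
  apply: rescale_interior; rewrite ?ler0n //.
  - by rewrite /N -natrD ler_nat; lia.
  - by move/scale_le: lo; rewrite mulrA NV mul1r.
  - by move/scale_lt: hi; rewrite mulrBr mulrA NV mul1r -/z -natr1 (mulrC N).
have bl_eq : (b ^ l)%N = (i j).+1 by move: ij_mid ij_lt; lia.
have -> : (i j)%:R = N - 1 by rewrite /N bl_eq -natr1 addrK.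
rewrite subrK; apply: rescale_last => //.
- by apply: lt_le_trans eps_lt _; rewrite -NV ler_peMl ?invr_ge0 ?ler0n.
- by move/scale_le: lo; rewrite mulrBr mulr1 NV.
- by move/scale_lt: hi; rewrite mulr1.
Qed.

Theorem mainTheorem6 (R : realType) (b d l : nat) (eps : R) :
  (2 <= b)%N -> (1 <= d)%N -> 0 < eps -> eps < bpow_inv R b l ->
  forall L : nat, (1 <= L)%N ->
  exists q : 'cV[R]_d -> 'cV[R]_1,
    @NN R d 1 (2 * d * b ^ ((l + L.-1) %/ L))%N L q /\
    forall i : 'I_d -> nat, (forall j, i j < b ^ l)%N ->
      forall x : 'cV[R]_d, @in_Omega R b d l i eps x -> q x ord0 ord0 = @ind R b d l i.
Proof.
move=> b_ge2 _ eps_gt0 eps_lt [//|L] _ /=.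
have b_gt0 : (0 < b)%N by lia.
set m := ((l + L) %/ L.+1)%N; set B := (b ^ m)%N; set N : R := (b ^ l)%N%:R.
have B_gt0 : (0 < B)%N by rewrite expn_gt0 b_gt0.
pose net := digit_net b l d B (eps / 2) ((1 - eps / 2) * N) ((N - 1) * (eps / 2)) L.
exists (net_eval net); split.
  exists net; split => //; apply: leq_trans (digit_net_width _ _ _ _ _ _ _ _) _.
  by rewrite !card_prod card_bool !card_ord; lia.
move=> i i_lt x x_Omega; apply: digit_net_eval => //.
- by lra.
- have l_le : (l <= m * L.+1)%N by have := ltn_ceil (l + L) (ltn0Sn L); rewrite -/m; nia.
  by move=> j; apply: leq_trans (i_lt j) _; rewrite -expnM leq_pexp2l.
- by move=> j; apply: Omega_rescale.
Qed.
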